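(* Let $C$ and $D$ be $R$-linear codes of length $n$, let $\eta$ be a bi-composition of $n$, and let $r,s$ be the compositions of $n$ given by \[ r_i=\sum_{\beta\in R}\eta_{\omega_i\beta},\qquad s_i=\sum_{\alpha\in R}\eta_{\alpha\omega_i}. \] Let $B^{C',D}_{r,s,\eta}$ be the number of pairs $(u,v)\in C'\times D$ with $\mathrm{comp}(u)=r$, $\mathrm{comp}(v)=s$ and $\eta(u,v)=\eta$. Then \[ \sum_{\sigma\in S_n}B^{C^\sigma,D}_{r,s,\eta}=A_r^C\,A_s^D\,\prod_{i=0}^{|R|-1}r_i!\;\prod_{i=0}^{|R|-1}\frac{s_i!}{\prod_{j=0}^{|R|-1}\eta_{\omega_j\omega_i}!}. \]
   Context: $R$ denotes $\mathbb F_q$ or $\mathbb Z_k$ ($k\ge 2$), with elements in a fixed order $0=\omega_0,\dots,\omega_{|R|-1}$. An $R$-linear code of length $n$ is an $\mathbb F_q$-subspace of $\mathbb F_q^n$, respectively an additive subgroup of $\mathbb Z_k^n$. For $u\in R^n$, $\mathrm{comp}(u)=(s_0(u),\dots,s_{|R|-1}(u))$, where $s_i(u)$ is the number of coordinates equal to $\omega_i$. $A_s^C=\#\{u\in C:\mathrm{comp}(u)=s\}$. For $u,v\in R^n$, $\eta(u,v)$ is the vector with components $\eta_{\alpha\beta}(u,v)=\#\{i:(u_i,v_i)=(\alpha,\beta)\}$ for $(\alpha,\beta)\in R^2$. A bi-composition of $n$ is a family of non-negative integers $\eta_{\alpha\beta}$, $(\alpha,\beta)\in R^2$, summing to $n$.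 For $\sigma\in S_n$, $u^\sigma=(u_{\sigma(1)},\dots,u_{\sigma(n)})$ and $C^\sigma=\{u^\sigma:u\in C\}$. *)

From HB Require Import structures.
From mathcomp Require Import all_boot all_order all_algebra all_fingroup.
Set Implicit Arguments. Unset Strict Implicit. Unset Printing Implicit Defensive.
Import GRing.Theory.
Local Open Scope ring_scope.

(* Words of length n over the alphabet R are row vectors 'rV[R]_n;
   the i-th coordinate of u is u ord0 i. *)

Definition comp (R : finType) (n : nat) (u : 'rV[R]_n) : {ffun R -> nat} :=
  [ffun a => #|[set i : 'I_n | u ord0 i == a]|].

Definition bicomp (R : finType) (n : nat) (u v : 'rV[R]_n) : {ffun R * R -> nat} :=
  [ffun ab => #|[set i : 'I_n | (u ord0 i, v ord0 i) == ab]|].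

Definition Acount (R : finType) (n : nat) (C : {set 'rV[R]_n}) (s : {ffun R -> nat}) : nat :=
  #|[set u in C | comp u == s]|.

Definition permw (R : finType) (n : nat) (sigma : 'S_n) (u : 'rV[R]_n) : 'rV[R]_n :=
  \row_i u ord0 (sigma i).
Definition permcode (R : finType) (n : nat) (sigma : 'S_n) (C : {set 'rV[R]_n})
  : {set 'rV[R]_n} := [set permw sigma u | u in C].

Definition Bcount (R : finType) (n : nat) (C' D : {set 'rV[R]_n})
  (r s : {ffun R -> nat}) (eta : {ffun R * R -> nat}) : nat :=
  #|[set p : 'rV[R]_n * 'rV[R]_n |
      [&& p.1 \in C', p.2 \in D, comp p.1 == r, comp p.2 == s & bicomp p.1 p.2 == eta]]|.

Definition is_bicomposition (R : finType) (n : nat) (eta : {ffun R * R -> nat}) : Prop :=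
  (\sum_(ab : R * R) eta ab)%N = n.

Definition rowcomp (R : finType) (eta : {ffun R * R -> nat}) : {ffun R -> nat} :=
  [ffun a => (\sum_(b : R) eta (a, b))%N].
Definition colcomp (R : finType) (eta : {ffun R * R -> nat}) : {ffun R -> nat} :=
  [ffun b => (\sum_(a : R) eta (a, b))%N].

Definition identity_holds (R : finType) (n : nat) (C D : {set 'rV[R]_n})
  (eta : {ffun R * R -> nat}) : Prop :=
  let r := rowcomp eta in
  let s := colcomp eta in
  ((\sum_(sigma : 'S_n) Bcount (permcode sigma C) D r s eta)%N%:R : rat)
  = (Acount C r)%:R * (Acount D s)%:R
    * (\prod_(a : R) ((r a)`!)%:R)
    * (\prod_(b : R) (((s b)`!)%:R / (\prod_(a : R) ((eta (a, b))`!)%:R))).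

Definition Fq_linear (F : finFieldType) (n : nat) (C : {set 'rV[F]_n}) : Prop :=
  0 \in C /\ forall (a : F) (u v : 'rV[F]_n), u \in C -> v \in C -> a *: u + v \in C.

Definition Zk_linear (k n : nat) (C : {set 'rV['Z_k]_n}) : Prop :=
  0 \in C /\ forall u v : 'rV['Z_k]_n, u \in C -> v \in C -> u - v \in C.

From Pilot Require Import Defs.
From mathcomp Require Import all_boot all_order all_algebra all_fingroup.
Set Implicit Arguments. Unset Strict Implicit. Unset Printing Implicit Defensive.
Import GRing.Theory Num.Theory.

(* The identity is a double-counting statement about the action of S_n on
   words u |-> u^sigma; it holds for arbitrary sets of words C and D.

   1. A permutation preserves every fiber of a map f : X -> T iff it is a
      family of permutations of the fibers, so there are prod_t |f^-1(t)|!
      of them.  Applied to i |-> u_i, this is the stabiliser of a word u.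
   2. Words of equal composition lie in one orbit, so every fiber of
      sigma |-> u^sigma has prod_a comp(u)_a! elements; summing any function
      over the orbit map gives the key formula [sum_orbit], and there are
      n! / prod_a c_a! words of any composition c of n.
   3. Pairing words (x,y) into a word over R*R turns eta(x,y) into a
      composition; hence there are n!/prod eta! pairs with eta(x,y) = eta.
      Combining with [sum_orbit] twice, for comp w = r and comp v = s the
      number of sigma with eta(w^sigma, v) = eta is prod r! prod s!/prod eta!.
   4. Summing this over w in C and v in D of the right compositions gives
      the identity in nat, and clearing denominators yields it in rat. *)

Lemma card_set_sum (I : finType) (P : pred I) :
  #|[set i | P i]| = (\sum_i (P i : nat))%N.
Proof.
rewrite -sum1_card big_mkcond /=; apply: eq_bigr => i _.
by rewrite inE; case: (P i).
Qed.

Section FiberPreservingPerms.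
Variables (X T : finType) (f : X -> T).

Definition fiber (t : T) : {set X} := [set x | f x == t].

Definition fiber_families := family (fun t => mem (perm_on (fiber t))).

Lemma fiber_families_stable g : g \in fiber_families ->
  forall x, f (g (f x) x) = f x.
Proof.
move=> /familyP gF x; have := perm_closed x (gF (f x)).
by rewrite !inE eqxx => /eqP.
Qed.

Definition glue (g : {ffun T -> {perm X}}) : {perm X} :=
  insubd (1%g : {perm X}) [ffun x => g (f x) x].

Lemma glueE g : g \in fiber_families -> forall x, glue g x = g (f x) x.
Proof.
move=> gF x; rewrite -pvalE /glue insubdK ?ffunE //.
apply/injectiveP => y z; rewrite !ffunE => gyz.
have fyz : f y = f z.
  by rewrite -(fiber_families_stable gF y) gyz fiber_families_stable.
by move: gyz; rewrite fyz => /perm_inj.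
Qed.

Definition restrict (s : {perm X}) (t : T) : {perm X} :=
  insubd (1%g : {perm X}) [ffun x => if f x == t then s x else x].

Lemma restrictE (s : {perm X}) t : (forall x, f (s x) = f x) -> forall x,
  restrict s t x = if f x == t then s x else x.
Proof.
move=> sf x; rewrite -pvalE /restrict insubdK ?ffunE //.
apply/injectiveP => y z; rewrite !ffunE.
case: ifP => fy; case: ifP => fz syz.
- exact: perm_inj syz.
- by move: fz; rewrite -syz sf fy.
- by move: fy; rewrite syz sf fz.
- exact: syz.
Qed.

Lemma restrict_family (s : {perm X}) : (forall x, f (s x) = f x) ->
  [ffun t => restrict s t] \in fiber_families.
Proof.
move=> sf; apply/familyP => t; rewrite ffunE; apply/subsetP => x.
by rewrite !inE restrictE //; case: ifP => // _; rewrite eqxx.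
Qed.

Lemma glue_inj : {in fiber_families &, injective glue}.
Proof.
move=> g h gF hF egh; apply/ffunP => t; apply/permP => x.
have [<-|ft] := eqVneq (f x) t; first by rewrite -glueE // egh glueE.
have xt : x \notin fiber t by rewrite inE ft.
move/familyP: gF => /(_ t) gF; move/familyP: hF => /(_ t) hF.
by rewrite (out_perm gF xt) (out_perm hF xt).
Qed.

Lemma card_fiber_preserving :
  #|[set s : {perm X} | [forall x, f (s x) == f x]]| = (\prod_t #|fiber t|`!)%N.
Proof.
have -> : [set s : {perm X} | [forall x, f (s x) == f x]] = glue @: fiber_families.
  apply/setP => s; rewrite inE; apply/forallP/imsetP => [sf|[g gF ->] x].
    have sf' x : f (s x) = f x by apply/eqP.
    exists [ffun t => restrict s t]; first exact: restrict_family.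
    by apply/permP => x; rewrite glueE ?restrict_family // ffunE restrictE ?eqxx.
  by rewrite glueE // fiber_families_stable.
rewrite card_in_imset; last exact: glue_inj.
rewrite card_family foldrE big_map big_enum /=.
by apply: eq_bigr => t _; exact: card_perm.
Qed.
End FiberPreservingPerms.

Lemma count_mem_codom (m : nat) (T : eqType) (g : 'I_m -> T) c :
  count_mem c [seq g i | i <- enum 'I_m] = #|[set i | g i == c]|.
Proof.
rewrite count_map cardsE cardE /enum_mem size_filter count_filter.
by apply: eq_count => i /=; rewrite andbT.
Qed.

Section Words.
Variables (T : finType) (n : nat).
Implicit Types (u x : 'rV[T]_n) (s t : 'S_n).

Lemma permwM s t u : permw (s * t)%g u = permw s (permw t u).
Proof. by apply/rowP => i; rewrite !mxE permM. Qed.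

Lemma permw1 u : permw 1%g u = u.
Proof. by apply/rowP => i; rewrite !mxE perm1. Qed.

Lemma permw_inj s : injective (@permw T n s).
Proof.
by move=> u v euv; rewrite -(permw1 u) -(permw1 v) -(mulVg s) !permwM euv.
Qed.

Lemma comp_permw s u : Defs.comp (permw s u) = Defs.comp u.
Proof.
apply/ffunP => a; rewrite !ffunE.
rewrite -(card_preimset [set i | u ord0 i == a] (@perm_inj _ s)).
by apply: eq_card => i; rewrite !inE mxE.
Qed.

(* The stabiliser of u permutes the positions of each letter among themselves. *)
Lemma card_stab_word u :
  #|[set s | permw s u == u]| = (\prod_a (Defs.comp u a)`!)%N.
Proof.
under [RHS]eq_bigr => a _ do rewrite ffunE.
rewrite -(card_fiber_preserving (fun i : 'I_n => u ord0 i)).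
apply: eq_card => s; rewrite !inE.
apply/eqP/forallP => [su i|su]; first by rewrite -{2}su mxE.
by apply/rowP => i; rewrite mxE; apply/eqP.
Qed.

Lemma orbit_comp u x : Defs.comp x = Defs.comp u -> exists s, x = permw s u.
Proof.
move=> cxu.
pose tx := [tuple x ord0 i | i < n]; pose tu := [tuple u ord0 i | i < n].
have /tuple_permP[p txp] : perm_eq tx tu.
  apply/allP => c _ /=; rewrite !count_mem_codom.
  by move/ffunP: cxu => /(_ c); rewrite !ffunE => ->.
exists p; apply/rowP => i.
have /(congr1 (fun tp => tnth tp i)) : tx = [tuple tnth tu (p i) | i < n].
  exact: val_inj.
by rewrite !tnth_mktuple mxE => ->.
Qed.

(* Each fiber of the orbit map is a coset of the stabiliser. *)
Lemma card_perms_to u x : Defs.comp x = Defs.comp u ->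
  #|[set s | permw s u == x]| = (\prod_a (Defs.comp u a)`!)%N.
Proof.
move=> /orbit_comp [s0 ->]; rewrite -card_stab_word.
rewrite -(card_preimset _ (mulgI s0)); apply: eq_card => s; rewrite !inE.
by rewrite permwM (inj_eq (@permw_inj s0)).
Qed.

Lemma sum_orbit u (F : 'rV[T]_n -> nat) :
  (\sum_s F (permw s u) =
   (\prod_a (Defs.comp u a)`!) * \sum_(x | Defs.comp x == Defs.comp u) F x)%N.
Proof.
rewrite (partition_big (fun s => permw s u) predT) //=.
rewrite (bigID (fun x => Defs.comp x == Defs.comp u)) /= [X in _ + X]big1 ?addn0; last first.
  move=> x /negP cx; apply: big1 => s /eqP sux; exfalso.
  by apply: cx; rewrite -sux comp_permw.
rewrite big_distrr /=; apply: eq_bigr => x /eqP cxu.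
rewrite (eq_bigr (fun _ => F x)); last by move=> s /eqP ->.
rewrite sum_nat_const -(card_perms_to cxu); congr (_ * _)%N.
by apply: eq_card => s; rewrite !inE.
Qed.

Lemma exists_word (c : {ffun T -> nat}) :
  (\sum_a c a)%N = n -> exists u, Defs.comp u = c.
Proof.
move=> sc; pose zs := flatten [seq nseq (c a) a | a <- enum T].
have zs_n : size zs == n.
  rewrite size_flatten /shape -map_comp -sc sumnE big_map big_enum /=.
  by apply/eqP/eq_bigr => a _; rewrite /= size_nseq.
exists (\row_i tnth (Tuple zs_n) i)%R; apply/ffunP => a; rewrite ffunE.
rewrite (eq_card (B := [set i | tnth (Tuple zs_n) i == a])); last first.
  by move=> i; rewrite !inE mxE.
rewrite -count_mem_codom map_tnth_enum /= count_flatten -map_comp.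
rewrite sumnE big_map big_enum /= (bigD1 a) //= count_nseq /= eqxx mul1n.
by rewrite big1 ?addn0 // => b ba; rewrite /= count_nseq /= (negbTE ba).
Qed.

Lemma card_words_comp (c : {ffun T -> nat}) : (\sum_a c a)%N = n ->
  (#|[set x : 'rV[T]_n | Defs.comp x == c]| * \prod_a (c a)`! = n`!)%N.
Proof.
move=> /exists_word [u <-].
have := sum_orbit u (fun _ => 1%N); rewrite sum1_card card_Sn sum1_card mulnC.
by move=> ->; congr (_ * _)%N; apply: eq_card => x; rewrite inE.
Qed.
End Words.

Section Pairs.
Variables (R : finType) (n : nat).
Implicit Types (x y w v : 'rV[R]_n) (eta : {ffun R * R -> nat}).

Definition zipw x y : 'rV[R * R]_n := (\row_i (x ord0 i, y ord0 i))%R.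
Definition unzipw (z : 'rV[R * R]_n) : 'rV[R]_n * 'rV[R]_n :=
  ((\row_i (z ord0 i).1)%R, (\row_i (z ord0 i).2)%R).

Lemma zipwK : cancel (fun p => zipw p.1 p.2) unzipw.
Proof. by move=> [x y]; congr (_, _); apply/rowP => i; rewrite !mxE. Qed.

Lemma unzipwK : cancel unzipw (fun p => zipw p.1 p.2).
Proof. by move=> z; apply/rowP => i; rewrite !mxE; case: (z ord0 i). Qed.

Lemma bicomp_zipw x y : bicomp x y = Defs.comp (zipw x y).
Proof. by apply/ffunP => ab; rewrite !ffunE; apply: eq_card => i; rewrite !inE mxE. Qed.

Lemma bicomp_permw (s : 'S_n) x y : bicomp (permw s x) (permw s y) = bicomp x y.
Proof.
rewrite !bicomp_zipw -(comp_permw s (zipw x y)); congr Defs.comp.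
by apply/rowP => i; rewrite !mxE.
Qed.

Lemma sum_card_pairs (a' b' : 'I_n -> R) a :
  (\sum_b #|[set i | (a' i, b' i) == (a, b)]|)%N = #|[set i | a' i == a]|.
Proof.
under eq_bigr => b _ do rewrite card_set_sum.
rewrite exchange_big card_set_sum; apply: eq_bigr => i _.
rewrite (bigD1 (b' i)) //= big1 ?addn0; first by rewrite xpair_eqE eqxx andbT.
by move=> b bi; rewrite xpair_eqE [b' i == b]eq_sym (negbTE bi) andbF.
Qed.

Lemma rowcomp_bicomp x y : rowcomp (bicomp x y) = Defs.comp x.
Proof.
apply/ffunP => a; rewrite !ffunE -(sum_card_pairs (fun i => x ord0 i) (fun i => y ord0 i)).
by apply: eq_bigr => b _; rewrite ffunE.
Qed.

Lemma colcomp_bicomp x y : colcomp (bicomp x y) = Defs.comp y.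
Proof.
apply/ffunP => b; rewrite !ffunE -(sum_card_pairs (fun i => y ord0 i) (fun i => x ord0 i)).
apply: eq_bigr => a _; rewrite ffunE; apply: eq_card => i.
by rewrite !inE !xpair_eqE andbC.
Qed.

Lemma card_pairs_bicomp eta : (\sum_ab eta ab)%N = n ->
  (#|[set p : 'rV[R]_n * 'rV[R]_n | bicomp p.1 p.2 == eta]| * \prod_ab (eta ab)`!
   = n`!)%N.
Proof.
move=> /card_words_comp <-; congr (_ * _)%N.
rewrite -(card_imset _ (can_inj zipwK)) (can2_imset_pre _ zipwK unzipwK).
by apply: eq_card => z; rewrite !inE bicomp_zipw unzipwK.
Qed.

Definition partners eta v : nat := #|[set x | bicomp x v == eta]|.

Lemma partners_permw eta (t : 'S_n) v : partners eta (permw t v) = partners eta v.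
Proof.
rewrite /partners -(card_preimset _ (@permw_inj _ _ t)).
by apply: eq_card => x; rewrite !inE bicomp_permw.
Qed.

(* Double counting of the pairs (x, y^t) over t in S_n and the orbit of v. *)
Lemma card_partners eta v : (\sum_ab eta ab)%N = n -> Defs.comp v = colcomp eta ->
  (partners eta v * \prod_ab (eta ab)`! = \prod_b (Defs.comp v b)`!)%N.
Proof.
move=> sum_eta cv.
have orbit_sum : (\sum_(t : 'S_n) partners eta (permw t v) = n`! * partners eta v)%N.
  by rewrite (eq_bigr _ (fun t _ => partners_permw eta t v)) sum_nat_const card_Sn.
have all_partners : (\sum_(y | Defs.comp y == Defs.comp v) partners eta y =
    #|[set p : 'rV[R]_n * 'rV[R]_n | bicomp p.1 p.2 == eta]|)%N.
  rewrite card_set_sum -(pair_bigA _ (fun x y => (bicomp x y == eta : nat))).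
  rewrite exchange_big /= big_mkcond /=.
  apply: eq_bigr => y _; rewrite /partners card_set_sum; case: ifP => // cy.
  apply/esym/big1 => x _; case: eqP => // exy; exfalso.
  by rewrite cv -exy colcomp_bicomp eqxx in cy.
apply/eqP; rewrite -(eqn_pmul2l (fact_gt0 n)) mulnA -orbit_sum sum_orbit.
by rewrite all_partners -mulnA card_pairs_bicomp // mulnC.
Qed.

Definition matchings eta w v : nat := #|[set s : 'S_n | bicomp (permw s w) v == eta]|.

(* Summing along the orbit of w reduces matchings to partners of v. *)
Lemma matchingsE eta w v : Defs.comp w = rowcomp eta ->
  matchings eta w v = ((\prod_a (Defs.comp w a)`!) * partners eta v)%N.
Proof.
move=> cw; rewrite /matchings card_set_sum (sum_orbit w (fun x => bicomp x v == eta : nat)).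
rewrite /partners card_set_sum; congr (_ * _)%N.
rewrite big_mkcond; apply: eq_bigr => x _ /=.
have [exv|_] := eqVneq (bicomp x v) eta; last by case: ifP.
by rewrite cw -exv rowcomp_bicomp eqxx.
Qed.

Lemma card_matchings eta w v : (\sum_ab eta ab)%N = n ->
  Defs.comp w = rowcomp eta -> Defs.comp v = colcomp eta ->
  (matchings eta w v * \prod_ab (eta ab)`! =
   (\prod_a (rowcomp eta a)`!) * \prod_b (colcomp eta b)`!)%N.
Proof.
move=> sum_eta cw cv; rewrite matchingsE // -mulnA card_partners //.
by rewrite cw cv.
Qed.
End Pairs.

Section Identity.
Variables (R : finType) (n : nat) (C D : {set 'rV[R]_n}) (eta : {ffun R * R -> nat}).
Hypothesis sum_eta : (\sum_ab eta ab)%N = n.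

Local Notation r := (rowcomp eta).
Local Notation s := (colcomp eta).

Lemma Bcount_permcode (sg : 'S_n) : Bcount (permcode sg C) D r s eta =
  (\sum_(w in C) \sum_(v in D)
     [&& Defs.comp w == r, Defs.comp v == s & bicomp (permw sg w) v == eta])%N.
Proof.
rewrite /Bcount card_set_sum -(pair_bigA _ (fun u v => [&& u \in permcode sg C,
  v \in D, Defs.comp u == r, Defs.comp v == s & bicomp u v == eta] : nat)) /=.
rewrite (bigID (mem (permcode sg C))) /= [X in _ + X]big1 ?addn0; last first.
  by move=> u /negbTE uC; apply: big1 => v _; rewrite uC.
rewrite big_imset /=; last by move=> u1 u2 _ _; apply: permw_inj.
apply: eq_bigr => w wC; rewrite [RHS]big_mkcond /=; apply: eq_bigr => v _.
by rewrite imset_f // comp_permw; case: (v \in D).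
Qed.

Lemma sum_pair_conditions w v :
  ((\sum_(sg : 'S_n) [&& Defs.comp w == r, Defs.comp v == s
                        & bicomp (permw sg w) v == eta]) * \prod_ab (eta ab)`! =
   (Defs.comp w == r) * (Defs.comp v == s) * ((\prod_a (r a)`!) * \prod_b (s b)`!))%N.
Proof.
have [cw|] := eqVneq (Defs.comp w) r; last by rewrite big1.
have [cv|] := eqVneq (Defs.comp v) s; last by rewrite big1 // => sg _; rewrite andbF.
by rewrite !mul1n -card_set_sum card_matchings.
Qed.

Lemma Acount_sum (A : {set 'rV[R]_n}) (c : {ffun R -> nat}) :
  Acount A c = (\sum_(u in A) (Defs.comp u == c))%N.
Proof.
rewrite /Acount card_set_sum [RHS]big_mkcond; apply: eq_bigr => u _.
by case: (u \in A).
Qed.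

Lemma sum_Bcount_nat :
  ((\sum_(sg : 'S_n) Bcount (permcode sg C) D r s eta) * \prod_ab (eta ab)`! =
   Acount C r * Acount D s * ((\prod_a (r a)`!) * \prod_b (s b)`!))%N.
Proof.
rewrite (eq_bigr _ (fun sg _ => Bcount_permcode sg)) exchange_big big_distrl /=.
rewrite !Acount_sum -mulnA [RHS]big_distrl /=; apply: eq_bigr => w _.
rewrite exchange_big big_distrl big_distrl [RHS]big_distrr /=.
by apply: eq_bigr => v _; rewrite sum_pair_conditions -mulnA.
Qed.
End Identity.

Lemma identity_holds_sets (R : finType) (n : nat) (C D : {set 'rV[R]_n})
    (eta : {ffun R * R -> nat}) :
  is_bicomposition n eta -> identity_holds C D eta.
Proof.
move=> sum_eta; have Bnat := sum_Bcount_nat C D sum_eta; rewrite /identity_holds.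
have eta_fact_neq0 : ((\prod_ab (eta ab)`!)%:R : rat) != 0%R.
  by rewrite pnatr_eq0 -lt0n prodn_gt0 // => ab; exact: fact_gt0.
have prod_eta : (\prod_b \prod_a ((eta (a, b))`!)%:R : rat)%R =
                ((\prod_ab (eta ab)`!)%N%:R)%R.
  by rewrite exchange_big pair_bigA natr_prod; apply: eq_bigr => -[a b].
rewrite prodf_div prod_eta; apply: (mulIf eta_fact_neq0).
by rewrite -!mulrA mulVf // mulr1 -natrM Bnat !natrM !natr_prod !mulrA.
Qed.

Theorem mainTheorem4 :
  (forall (F : finFieldType) (n : nat) (C D : {set 'rV[F]_n}) (eta : {ffun F * F -> nat}),
      Fq_linear C -> Fq_linear D -> is_bicomposition n eta ->
      identity_holds C D eta)
  /\
  (forall (k : nat), 1 < k ->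
   forall (n : nat) (C D : {set 'rV['Z_k]_n}) (eta : {ffun 'Z_k * 'Z_k -> nat}),
      Zk_linear C -> Zk_linear D -> is_bicomposition n eta ->
      identity_holds C D eta).
Proof.
split=> [F n C D eta _ _|k _ n C D eta _ _]; exact: identity_holds_sets.
Qed.
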